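(* Let $T=(T_a,T_b)$ be a rooted binary tree on $n$ leaves, where $T_a,T_b$ have $n_a,n_b$ leaves. If $T$ has minimal Colless index among rooted binary trees with $n$ leaves, then $T_a$ has minimal Colless index among rooted binary trees with $n_a$ leaves and $T_b$ has minimal Colless index among rooted binary trees with $n_b$ leaves.
   Context: A rooted binary tree with $n\geq 2$ leaves is a rooted tree whose root has degree 2 and all other internal nodes have degree 3; for $n=1$ it is a single node. $T=(T_a,T_b)$ denotes the decomposition into the subtrees rooted at the two children of the root. For an internal node $v$ with children $v_1,v_2$, let $\kappa(v_i)$ be the number of leaves descending from $v_i$ ($1$ if a leaf). The Colless index is $\mathcal{C}(T)=\sum_v|\kappa(v_1)-\kappa(v_2)|$ over internal nodes $v$. *)

From mathcomp Require Import all_boot.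
Set Implicit Arguments. Unset Strict Implicit. Unset Printing Implicit Defensive.

(* Rooted binary trees: a single leaf, or a root with two child subtrees.
   (Children are ordered here; the Colless index is symmetric, so this does
   not affect the notion of minimality.) *)
Inductive bintree : Type :=
| Leaf : bintree
| Node : bintree -> bintree -> bintree.

Fixpoint leaves (t : bintree) : nat :=
  match t with
  | Leaf => 1
  | Node a b => leaves a + leaves b
  end.

Definition absdiff (m n : nat) : nat := (m - n) + (n - m).

Fixpoint colless (t : bintree) : nat :=
  match t with
  | Leaf => 0
  | Node a b => absdiff (leaves a) (leaves b) + colless a + colless b
  end.

Definition colless_minimal (t : bintree) : Prop :=
  forall t' : bintree, leaves t' = leaves t -> colless t <= colless t'.

From mathcomp Require Import all_boot.

(* Replacing a child by a tree with the same number of leaves keeps the root's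
   balance term, so the Colless index changes exactly by the change in that
   child's index; a better child would thus give a better tree. *)

Lemma colless_minimal_NodeL (a b : bintree) :
  colless_minimal (Node a b) -> colless_minimal a.
Proof.
move=> min_ab t' leaves_t'; have /= := min_ab (Node t' b).
by rewrite leaves_t' leq_add2r leq_add2l; apply.
Qed.

Lemma colless_minimal_NodeR (a b : bintree) :
  colless_minimal (Node a b) -> colless_minimal b.
Proof.
move=> min_ab t' leaves_t'; have /= := min_ab (Node a t').
by rewrite leaves_t' -!addnA !leq_add2l; apply.
Qed.

Theorem lemma2 (Ta Tb : bintree) :
  colless_minimal (Node Ta Tb) ->
  colless_minimal Ta /\ colless_minimal Tb.
Proof.
move=> min_T; split.
- exact: colless_minimal_NodeL min_T.
- exact: colless_minimal_NodeR min_T.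
Qed.
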